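(* Consider a birth-and-death process on $\{0,1,2,\dots\}$ whose birth rates $\lambda_n$ and death rates $\mu_n$ all belong to $(0,\infty)$. The process is transient if there exist $c>1$, an integer $K\ge1$ and a number $n_0$ such that for all $n>n_0$ $$\frac{\lambda_n}{\mu_n}\ge 1+\frac1n+\sum_{k=1}^{K-1}\frac{1}{n\prod_{j=1}^{k}\ln_{(j)}n}+\frac{c}{n\prod_{k=1}^{K}\ln_{(k)}n},$$ and it is recurrent if there exist an integer $K\ge1$ and a number $n_0$ such that for all $n>n_0$ $$\frac{\lambda_n}{\mu_n}\le 1+\frac1n+\sum_{k=1}^{K}\frac{1}{n\prod_{j=1}^{k}\ln_{(j)}n}.$$
   Context: $\ln_{(k)}x$ denotes the $k$-fold iterated natural logarithm: $\ln_{(1)}x=\ln x$ and $\ln_{(k)}x=\ln_{(k-1)}(\ln x)$ for $k\ge2$. An empty sum equals $0$. *)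

From HB Require Import structures.
From mathcomp Require Import all_boot all_order all_algebra.
From mathcomp Require Import all_classical all_reals all_analysis.
Set Implicit Arguments. Unset Strict Implicit. Unset Printing Implicit Defensive.
Import Order.TTheory GRing.Theory Num.Theory.
Import numFieldNormedType.Exports.
Local Open Scope classical_set_scope.
Local Open Scope ring_scope.

Section BD.
Variable R : realType.

Definition lnk (k : nat) (x : R) : R := iter k (@ln R) x.

Variables lam mu : nat -> R.

(* Transition probabilities of the embedded jump chain of the
   birth-and-death process on {0,1,2,...} (state 0 has no death). *)
Definition jumpP (i j : nat) : R :=
  if i == 0%N then (j == 1%N)%:R
  else if j == i.+1 then lam i / (lam i + mu i)
  else if j == i.-1 then mu i / (lam i + mu i)
  else 0.

(* hit t i = probability, starting from i, that the jump chain hits 0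
   for the first time exactly at step t (jumps are nearest-neighbour,
   so from i only states j < i.+2 are reachable). *)
Fixpoint hit (t i : nat) : R :=
  match t with
  | 0%N => (i == 0%N)%:R
  | t'.+1 => if i == 0%N then 0 else \sum_(j < i.+2) jumpP i j * hit t' j
  end.

(* probability that the chain started at 0 first returns to 0 at step t.+1 *)
Definition first_return (t : nat) : R := \sum_(j < 2) jumpP 0 j * hit t j.

(* Recurrence: return to 0 (almost surely) — the total first-return
   probability equals 1.  (A continuous-time chain is recurrent iff its
   jump chain is; the chain is irreducible so state 0 suffices.) *)
Definition bd_recurrent : Prop :=
  (fun N : nat => \sum_(t < N) first_return t) @ \oo --> (1 : R).

Definition bd_transient : Prop := ~ bd_recurrent.

End BD.

From mathcomp Require Import all_boot all_order all_algebra.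
From mathcomp Require Import all_classical all_reals all_analysis.
From mathcomp Require Import ring lra.
Set Implicit Arguments. Unset Strict Implicit. Unset Printing Implicit Defensive.
Import Order.TTheory GRing.Theory Num.Theory.
Import numFieldNormedType.Exports.
Local Open Scope classical_set_scope.
Local Open Scope ring_scope.

(* With rho_0 = 1 and rho_n = prod_(1<=k<=n) mu_k/lam_k, the scale function
   s(n) = sum_(m<n) rho_m is harmonic for the jump chain off 0 and vanishes at 0.
   Let avoid_N(i) be the probability of staying off 0 during N steps from i; the
   first-return probability is 1 - lim_N avoid_N(1).  If s <= B, then s/B <= avoid_N
   by induction on N, so the chain escapes with probability at least 1/B.  The limit
   of avoid_N is harmonic and vanishes at 0, hence is a multiple of s; being at most 1,
   it vanishes when s is unbounded.

   Since rho_(n+1)/rho_n = mu_(n+1)/lam_(n+1), a rate condition compares rho with any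
   positive sequence of larger (resp. smaller) consecutive ratios.  Put
   L_K(x) = prod_(j<=K) ln_(j) x and Psi_K = sum_(k<=K) ln_(k+1), so that
   exp(-Psi_K x) = 1/(x L_K x); the mean value inequality for ln squeezes the increments
   of ln_(k+1) and Psi_K between the terms of the critical sum at x and at x+1.  In the
   recurrent case 1/(1+a) >= exp(-a) gives rho_n >~ 1/(n L_K n), which dominates the
   increments of ln_(K+1), so s diverges.  In the transient case
   1/(1+a) <= exp(-a+a^2) gives rho_n <~ exp(-(c-1) ln_(K+1) n)/(n L_K n), which is
   dominated by the decrements of exp(-(c-1) ln_(K+1)), so s is bounded. *)

Section SequenceComparison.
Variable R : realFieldType.
Implicit Types u v e z : nat -> R.

Lemma ratio_le_eventually u v : (forall n, 0 < u n) -> (forall n, 0 < v n) ->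
  (\forall n \near \oo, u n.+1 / u n <= v n.+1 / v n) ->
  exists2 C, 0 < C & \forall n \near \oo, u n <= C * v n.
Proof.
move=> u0 v0 [N _ le_ratio]; exists (u N / v N); first by rewrite divr_gt0.
exists N => // n /= /subnK <-; elim: (n - N)%N => [|d IH].
  by rewrite add0n divfK ?gt_eqF.
rewrite addSn; set m := (d + N)%N in IH *.
have le_um : u m.+1 <= v m.+1 / v m * u m.
  by rewrite -ler_pdivrMr //; apply: le_ratio; exact: leq_addl.
apply: le_trans le_um (le_trans (ler_wpM2l _ IH) _); first by rewrite divr_ge0 ?ltW.
by rewrite mulrCA divfK ?gt_eqF.
Qed.

Lemma sum_bounded_of_telescoping u e : (forall n, 0 <= u n) -> (forall n, 0 <= e n) ->
  (\forall n \near \oo, u n <= e n - e n.+1) ->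
  exists B, forall M, \sum_(m < M) u m <= B.
Proof.
move=> u0 e0 [N _ le_u]; exists (\sum_(m < N) u m + e N) => M.
rewrite -!(big_mkord xpredT); have [le_NM | lt_MN] := leqP N M; last first.
  rewrite (big_cat_nat (leq0n M) (ltnW lt_MN)) /= -addrA lerDl.
  by rewrite addr_ge0 // sumr_ge0.
rewrite (big_cat_nat (leq0n N) le_NM) /= lerD2l.
apply: le_trans (_ : _ <= \sum_(N <= m < M) (e m - e m.+1)) _.
  by apply: ler_sum_nat => m /andP[le_m _]; apply: le_u.
rewrite (telescope_sumr_eq (fun n => - e n) _ le_NM) => [|k _]; last first.
  by rewrite opprK addrC.
by have := e0 M; lra.
Qed.

Lemma sum_unbounded_of_telescoping u z : (\forall n \near \oo, z n.+1 - z n <= u n) ->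
  z @ \oo --> +oo -> forall B, exists M, B < \sum_(m < M) u m.
Proof.
move=> [N _ le_u] /cvgryPge z_cvgy B.
have [N' _ le_z] := z_cvgy (B - \sum_(m < N) u m + z N + 1).
have le_NM := leq_maxl N N'; exists (maxn N N').
rewrite -!(big_mkord xpredT) (big_cat_nat (leq0n N) le_NM) /=.
have : z (maxn N N') - z N <= \sum_(N <= m < maxn N N') u m.
  rewrite -(telescope_sumr_eq z (fun n => z n.+1 - z n) le_NM) //.
  by apply: ler_sum_nat => m /andP[le_m _]; apply: le_u.
have := le_z _ (leq_maxr N N'); rewrite big_mkord; lra.
Qed.

Lemma near_succ (P : nat -> Prop) :
  (\forall n \near \oo, P n) -> \forall n \near \oo, P n.+1.
Proof. by move=> [N _ hP]; exists N => // n /= /leqW /hP. Qed.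

Lemma sqr_le_subr_div (a b x : R) : 0 < x -> 0 <= a -> a <= b / (x + 1) ->
  a ^+ 2 <= b ^+ 2 / x - b ^+ 2 / (x + 1).
Proof.
move=> x0 a0 le_a; have x1_gt0 : 0 < x + 1 by rewrite addr_gt0.
have -> : b ^+ 2 / x - b ^+ 2 / (x + 1) = b ^+ 2 / (x + 1) / x.
  by field; rewrite !gt_eqF.
apply: le_trans (_ : (b / (x + 1)) ^+ 2 <= _); first by rewrite ler_pXn2r ?nnegrE ?(le_trans a0).
rewrite expr_div_n -mulrA -invfM; apply: ler_wpM2l; first exact: sqr_ge0.
by rewrite lef_pV2 ?posrE ?mulr_gt0 ?exprn_gt0 // expr2 ler_pM2l // lerDl.
Qed.

End SequenceComparison.

Section ExpInequalities.
Variable R : realType.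
Implicit Types a b s : R.

Lemma expRN_le_inv1D a : 0 <= a -> expR (- a) <= (1 + a)^-1.
Proof.
move=> a0; rewrite expRN lef_pV2 ?posrE ?expR_gt0 ?expR_ge1Dx //.
by rewrite (lt_le_trans ltr01) // lerDl.
Qed.

Lemma inv1D_le_expR a : 0 <= a -> (1 + a)^-1 <= expR (- a + a ^+ 2).
Proof.
move=> a0; have a1_gt0 : 0 < 1 + a by rewrite (lt_le_trans ltr01) // lerDl.
apply: le_trans (_ : 1 - a + a ^+ 2 <= _); last by rewrite -addrA expR_ge1Dx.
rewrite -div1r ler_pdivrMr // mulrC.
have -> : (1 + a) * (1 - a + a ^+ 2) = 1 + a ^+ 3 by ring.
by rewrite lerDl exprn_ge0.
Qed.

Lemma expR_incr_le s a b :
  s * (b - a) * expR (- (s * b)) <= expR (- (s * a)) - expR (- (s * b)).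
Proof.
have -> : expR (- (s * a)) = expR (- (s * b)) * expR (s * (b - a)).
  by rewrite -expRD; congr expR; ring.
have := expR_ge1Dx (s * (b - a)); have := expR_gt0 (- (s * b)); nra.
Qed.

End ExpInequalities.

Section IteratedLogarithm.
Variable R : realType.
Implicit Types (x y z s : R) (k K : nat).

Definition lnprod k x := \prod_(1 <= j < k.+1) lnk j x.

Lemma lnprod0 x : lnprod 0 x = 1.
Proof. by rewrite /lnprod big_geq. Qed.

Lemma lnprodS k x : lnprod k.+1 x = lnprod k x * lnk k.+1 x.
Proof. by rewrite /lnprod big_nat_recr. Qed.

Definition logs_ge1 k x := forall j, (j <= k)%N -> 1 <= lnk j x.

Lemma logs_ge1W k k' x : (k' <= k)%N -> logs_ge1 k x -> logs_ge1 k' x.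
Proof. by move=> le_k hx j le_j; apply: hx (leq_trans le_j le_k). Qed.

Lemma logs_ge1_gt0 k j x : (j <= k)%N -> logs_ge1 k x -> 0 < lnk j x.
Proof. by move=> le_j /(_ j le_j); apply: lt_le_trans. Qed.

Lemma lnprod_ge1 k x : logs_ge1 k x -> 1 <= lnprod k x.
Proof.
elim: k => [|k IH] hx; first by rewrite lnprod0.
rewrite lnprodS -[1]mulr1; apply: ler_pM => //.
  exact: IH (logs_ge1W (leqnSn k) hx).
exact: hx.
Qed.

Lemma lnprod_gt0 k x : logs_ge1 k x -> 0 < lnprod k x.
Proof. by move/lnprod_ge1; apply: lt_le_trans. Qed.

Lemma ln_diff_le y z : 0 < y -> 0 < z -> ln y - ln z <= (y - z) / z.
Proof.
move=> y0 z0; rewrite -ln_div ?posrE //.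
have -> : y / z = 1 + (y - z) / z by rewrite mulrBl divff ?gt_eqF // addrC subrK.
apply: le_ln1Dx; rewrite mulrBl divff ?gt_eqF //.
have : 0 < y / z by rewrite divr_gt0.
lra.
Qed.

Lemma ln_diff_ge y z : 0 < y -> 0 < z -> (y - z) / y <= ln y - ln z.
Proof.
move=> y0 z0; have := ln_diff_le z0 y0.
by rewrite -(opprB y) mulNr -(opprB (ln y)) lerN2.
Qed.

Lemma lnkS_incr_le k x : logs_ge1 k x -> logs_ge1 k (x + 1) ->
  lnk k.+1 (x + 1) - lnk k.+1 x <= (x * lnprod k x)^-1.
Proof.
elim: k => [|k IH] hx hx1.
  have x0 : 0 < x := logs_ge1_gt0 (leqnn 0) hx.
  have x10 : 0 < x + 1 := logs_ge1_gt0 (leqnn 0) hx1.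
  by apply: le_trans (ln_diff_le x10 x0) _; rewrite lnprod0 mulr1 addrAC subrr add0r mul1r.
have u0 := logs_ge1_gt0 (leqnn k.+1) hx1; have v0 := logs_ge1_gt0 (leqnn k.+1) hx.
apply: le_trans (ln_diff_le u0 v0) _.
rewrite lnprodS mulrA invfM ler_pM2r ?invr_gt0 //.
exact: IH (logs_ge1W (leqnSn k) hx) (logs_ge1W (leqnSn k) hx1).
Qed.

Lemma lnkS_incr_ge k x : logs_ge1 k x -> logs_ge1 k (x + 1) ->
  ((x + 1) * lnprod k (x + 1))^-1 <= lnk k.+1 (x + 1) - lnk k.+1 x.
Proof.
elim: k => [|k IH] hx hx1.
  have x0 : 0 < x := logs_ge1_gt0 (leqnn 0) hx.
  have x10 : 0 < x + 1 := logs_ge1_gt0 (leqnn 0) hx1.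
  by apply: le_trans (ln_diff_ge x10 x0); rewrite lnprod0 mulr1 addrAC subrr add0r mul1r.
have u0 := logs_ge1_gt0 (leqnn k.+1) hx1; have v0 := logs_ge1_gt0 (leqnn k.+1) hx.
apply: le_trans (ln_diff_ge u0 v0).
rewrite lnprodS mulrA invfM ler_pM2r ?invr_gt0 //.
exact: IH (logs_ge1W (leqnSn k) hx) (logs_ge1W (leqnSn k) hx1).
Qed.

Definition lnk_sum K x := \sum_(k < K.+1) lnk k.+1 x.
Definition inv_lnprod_sum K x := \sum_(k < K.+1) (x * lnprod k x)^-1.

Lemma expRN_lnk_sum K x : logs_ge1 K x -> expR (- lnk_sum K x) = (x * lnprod K x)^-1.
Proof.
elim: K => [|K IH] hx.
  by rewrite /lnk_sum big_ord1 lnprod0 mulr1 expRN lnK // posrE (logs_ge1_gt0 (leqnn 0) hx).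
rewrite /lnk_sum big_ord_recr /= -/(lnk_sum K x) opprD expRD IH; last first.
  exact: logs_ge1W (leqnSn K) hx.
rewrite expRN lnK ?posrE; last exact: logs_ge1_gt0 (leqnn K.+1) hx.
by rewrite lnprodS mulrA [RHS]invfM.
Qed.

Lemma lnk_sum_incr_le K x : logs_ge1 K x -> logs_ge1 K (x + 1) ->
  lnk_sum K (x + 1) - lnk_sum K x <= inv_lnprod_sum K x.
Proof.
move=> hx hx1; rewrite /lnk_sum -sumrB; apply: ler_sum => k _.
have le_k : (k <= K)%N by rewrite -ltnS.
by apply: lnkS_incr_le; apply: logs_ge1W le_k _.
Qed.

Lemma lnk_sum_incr_ge K x : logs_ge1 K x -> logs_ge1 K (x + 1) ->
  inv_lnprod_sum K (x + 1) <= lnk_sum K (x + 1) - lnk_sum K x.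
Proof.
move=> hx hx1; rewrite /lnk_sum -sumrB; apply: ler_sum => k _.
have le_k : (k <= K)%N by rewrite -ltnS.
by apply: lnkS_incr_ge; apply: logs_ge1W le_k _.
Qed.

Lemma inv_lnprod_sumE K x :
  inv_lnprod_sum K x = 1 / x + \sum_(1 <= k < K.+1) 1 / (x * lnprod k x).
Proof.
rewrite /inv_lnprod_sum big_ord_recl lnprod0 mulr1 div1r big_add1 /= big_mkord.
by congr (_ + _); apply: eq_bigr => k _; rewrite div1r.
Qed.

Lemma inv_lnprod_sum_recr c K x : (1 <= K)%N ->
  1 + 1 / x + \sum_(1 <= k < K) 1 / (x * lnprod k x) + c / (x * lnprod K x) =
  1 + inv_lnprod_sum K x + (c - 1) / (x * lnprod K x).
Proof. by move=> K_ge1; rewrite inv_lnprod_sumE big_nat_recr //=; ring. Qed.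

Lemma inv_lnprod_sum_ge0 K x : logs_ge1 K x -> 0 <= inv_lnprod_sum K x.
Proof.
move=> hx; apply: sumr_ge0 => k _; rewrite invr_ge0 ltW // mulr_gt0 //.
  exact: logs_ge1_gt0 (leq0n K) hx.
by apply: lnprod_gt0; apply: logs_ge1W hx; rewrite -ltnS.
Qed.

Lemma inv_lnprod_le k x : logs_ge1 k x -> (x * lnprod k x)^-1 <= x^-1.
Proof.
move=> hx; have x0 := logs_ge1_gt0 (leq0n k) hx.
by rewrite invfM ler_piMr ?invr_ge0 ?(ltW x0) // invf_le1 ?lnprod_ge1 ?lnprod_gt0.
Qed.

Lemma inv_lnprod_sum_le K x : logs_ge1 K x -> inv_lnprod_sum K x <= K.+1%:R / x.
Proof.
move=> hx; apply: (@le_trans _ _ (\sum_(k < K.+1) x^-1)).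
  apply: ler_sum => k _; apply: inv_lnprod_le; apply: logs_ge1W hx.
  by rewrite -ltnS.
by rewrite sumr_const card_ord mulr_natl.
Qed.

Lemma lnk_incr_le_expRN K x : logs_ge1 K x -> logs_ge1 K (x + 1) ->
  lnk K.+1 (x + 1) - lnk K.+1 x <= expR (- lnk_sum K x).
Proof. by move=> hx hx1; rewrite expRN_lnk_sum //; apply: lnkS_incr_le. Qed.

Lemma expRN_lnk_sum_le_telescope s K x : 0 <= s -> logs_ge1 K x -> logs_ge1 K (x + 1) ->
  s * expR (- (lnk_sum K (x + 1) + s * lnk K.+1 (x + 1))) <=
  expR (- (s * lnk K.+1 x)) - expR (- (s * lnk K.+1 (x + 1))).
Proof.
move=> s0 hx hx1; apply: le_trans (expR_incr_le _ _ _).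
rewrite opprD expRD expRN_lnk_sum // mulrA ler_wpM2r ?expR_ge0 // ler_wpM2l //.
exact: lnkS_incr_ge.
Qed.

Lemma lnk_ge k y x : iter k expR y <= x -> y <= lnk k x.
Proof.
elim: k x => [//|k IH] x le_x; rewrite /lnk iterSr; apply: IH.
have x0 : 0 < x by apply: lt_le_trans le_x; rewrite expR_gt0.
by rewrite -[iter k expR y]expRK ler_ln ?posrE ?expR_gt0.
Qed.

Lemma iter_expR_le j k y : (j <= k)%N -> iter j expR y <= iter k expR y.
Proof.
move/subnK <-; elim: (k - j)%N => [|d IH]; first by rewrite add0n.
apply: le_trans IH _; rewrite addSn /=.
by have := expR_ge1Dx (iter (d + j) expR y); lra.
Qed.

Lemma nat_ge_eventually y : \forall n \near \oo, y <= n%:R :> R.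
Proof. by have /cvgryPge := @cvgr_idn R; apply. Qed.

Lemma logs_ge1_eventually k : \forall n \near \oo, logs_ge1 k (n%:R : R).
Proof.
apply: filterS (nat_ge_eventually (iter k expR 1)) => n le_n j le_j.
by apply: lnk_ge; apply: le_trans le_n; apply: iter_expR_le.
Qed.

Lemma lnk_cvgy k : (fun n => lnk k (n%:R : R)) @ \oo --> +oo.
Proof.
apply/cvgryPge => y; apply: filterS (nat_ge_eventually (iter k expR y)) => n.
exact: lnk_ge.
Qed.

End IteratedLogarithm.

Section BirthDeathChain.
Variable R : realType.
Variables lam mu : nat -> R.
Hypothesis lam_gt0 : forall n, 0 < lam n.
Hypothesis mu_gt0 : forall n, 0 < mu n.

Definition pbirth i := lam i / (lam i + mu i).
Definition pdeath i := mu i / (lam i + mu i).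

Lemma pbirth_gt0 i : 0 < pbirth i.
Proof. by rewrite divr_gt0 // addr_gt0. Qed.

Lemma pdeath_gt0 i : 0 < pdeath i.
Proof. by rewrite divr_gt0 // addr_gt0. Qed.

Lemma pdeathE i : pdeath i = 1 - pbirth i.
Proof.
have : lam i + mu i != 0 by rewrite gt_eqF // addr_gt0.
by rewrite /pdeath /pbirth => ?; field.
Qed.

Lemma pbirthD_pdeath i : pbirth i + pdeath i = 1.
Proof. by rewrite pdeathE addrC subrK. Qed.

Lemma sum_jumpP i (f : nat -> R) :
  \sum_(j < i.+3) jumpP lam mu i.+1 j * f j = pbirth i.+1 * f i.+2 + pdeath i.+1 * f i.
Proof.
rewrite 3!big_ord_recr big1 => [|j _] /=; rewrite /jumpP /=; last first.
  have j_lt : (j < i)%N := ltn_ord j.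
  by rewrite (ltn_eqF j_lt) ltn_eqF ?mul0r // (leq_trans j_lt) // leqW.
rewrite (ltn_eqF (leqW (ltnSn i))) (ltn_eqF (ltnSn i.+1)) (gtn_eqF (ltnSn i)) !eqxx.
by rewrite !mul0r add0r addr0 addrC.
Qed.

Definition hit_before N i := \sum_(t < N) hit lam mu t i.
Definition avoid N i := 1 - hit_before N i.

Lemma avoid0 i : avoid 0 i = 1.
Proof. by rewrite /avoid /hit_before big_ord0 subr0. Qed.

Lemma avoidS0 N : avoid N.+1 0 = 0.
Proof. by rewrite /avoid /hit_before big_ord_recl /= big1 ?addr0 ?subrr. Qed.

Lemma avoidS N i :
  avoid N.+1 i.+1 = pbirth i.+1 * avoid N i.+2 + pdeath i.+1 * avoid N i.
Proof.
have hitS : hit_before N.+1 i.+1 =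
    pbirth i.+1 * hit_before N i.+2 + pdeath i.+1 * hit_before N i.
  rewrite /hit_before big_ord_recl /= add0r exchange_big /=.
  under eq_bigr => j _ do under eq_bigr => t _ do rewrite add0n.
  under eq_bigr => j _ do rewrite -mulr_sumr.
  exact: (sum_jumpP _ (hit_before N)).
by rewrite /avoid hitS pdeathE; ring.
Qed.

Lemma avoid_itv N i : 0 <= avoid N i <= 1.
Proof.
elim: N i => [|N IH] [|i]; rewrite ?avoid0 ?avoidS0 ?ler01 ?lexx //.
have /andP[a0 a1] := IH i.+2; have /andP[b0 b1] := IH i.
have p0 := pbirth_gt0 i.+1; have q0 := pdeath_gt0 i.+1.
rewrite avoidS; apply/andP; split; first by rewrite addr_ge0 // mulr_ge0 // ltW.
by rewrite -(pbirthD_pdeath i.+1) lerD // ler_piMr // ltW.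
Qed.

Lemma avoid_noninc i : nonincreasing_seq (avoid ^~ i).
Proof.
apply/nonincreasing_seqP => N; elim: N i => [|N IH] [|i].
- by rewrite avoidS0 avoid0 ler01.
- by rewrite avoid0; have /andP[] := avoid_itv 1 i.+1.
- by rewrite !avoidS0.
- by rewrite avoidS [leRHS]avoidS lerD // ler_pM2l ?pbirth_gt0 ?pdeath_gt0.
Qed.

Lemma sum_first_returnE N : \sum_(t < N) first_return lam mu t = 1 - avoid N 1.
Proof.
rewrite /avoid subKr; apply: eq_bigr => t _.
by rewrite /first_return big_ord_recr /= big_ord1 /jumpP /= mul0r add0r mul1r.
Qed.

Definition harmonic (h : nat -> R) :=
  forall i, h i.+1 = pbirth i.+1 * h i.+2 + pdeath i.+1 * h i.

Lemma harmonic_le_avoid h : harmonic h -> h 0 <= 0 -> (forall i, h i <= 1) ->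
  forall N i, h i <= avoid N i.
Proof.
move=> hh h0 h1; elim=> [|N IH] [|i]; rewrite ?avoid0 ?avoidS0 //.
by rewrite avoidS hh lerD // ler_pM2l ?pbirth_gt0 ?pdeath_gt0.
Qed.

Fixpoint rho n := if n is n'.+1 then rho n' * (mu n / lam n) else 1.

Lemma rhoS n : rho n.+1 = rho n * (mu n.+1 / lam n.+1).
Proof. by []. Qed.

Lemma rho_gt0 n : 0 < rho n.
Proof.
elim: n => [|n IH]; first exact: ltr01.
by rewrite rhoS mulr_gt0 // divr_gt0 ?mu_gt0 ?lam_gt0.
Qed.

Lemma rho_balance n : pbirth n.+1 * rho n.+1 = pdeath n.+1 * rho n.
Proof.
rewrite rhoS /pbirth /pdeath.
have := lam_gt0 n.+1; have := mu_gt0 n.+1 => m0 l0.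
by field; rewrite !gt_eqF ?addr_gt0.
Qed.

Definition scale n := \sum_(m < n) rho m.

Lemma scaleS n : scale n.+1 = scale n + rho n.
Proof. by rewrite /scale big_ord_recr. Qed.

Lemma scale_harmonic : harmonic scale.
Proof.
move=> i; rewrite !scaleS [_ + rho i.+1]addrC mulrDr rho_balance !pdeathE.
ring.
Qed.

Lemma harmonicE h : harmonic h -> forall n, h n = h 0 + (h 1 - h 0) * scale n.
Proof.
move=> hh.
have incr i : h i.+1 - h i = (h 1 - h 0) * rho i.
  elim: i => [|i IH]; first by rewrite mulr1.
  apply: (mulfI (lt0r_neq0 (pbirth_gt0 i.+1))).
  rewrite [RHS]mulrCA rho_balance mulrCA -IH (hh i) pdeathE.
  ring.
move=> n; rewrite /scale -(big_mkord xpredT) mulr_sumr.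
rewrite (telescope_sumr_eq h _ (leq0n n)) => [|k _]; last exact/esym/incr.
by rewrite addrC subrK.
Qed.

Lemma transient_of_bounded_scale :
  (exists B, forall n, scale n <= B) -> bd_transient lam mu.
Proof.
move=> [B scale_le] rec.
have scale1 : scale 1 = 1 by rewrite /scale big_ord1.
have B_gt0 : 0 < B by apply: lt_le_trans (scale_le 1%N); rewrite scale1.
have avoid1_ge N : B^-1 <= avoid N 1.
  rewrite -[B^-1]mul1r -scale1; apply: (@harmonic_le_avoid (fun n => scale n / B)).
  - by move=> i; rewrite /= scale_harmonic mulrDl !mulrA.
  - by rewrite /scale big_ord0 mul0r.
  - by move=> i; rewrite /= ler_pdivrMr // mul1r.
have lt1 : 1 - B^-1 < 1 by rewrite gtrBl invr_gt0.
have [N _ /(_ N (leqnn N))] := cvgr_gt 1 rec _ lt1.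
by rewrite sum_first_returnE; have := avoid1_ge N; lra.
Qed.

Lemma avoid_cvg i : cvgn (avoid ^~ i).
Proof.
apply: nonincreasing_is_cvgn; first exact: avoid_noninc.
by exists 0 => _ [N _ <-]; have /andP[] := avoid_itv N i.
Qed.

Definition escape i := limn (avoid ^~ i).

Lemma escape_itv i : 0 <= escape i <= 1.
Proof.
rewrite /escape; apply/andP; split; [apply: limr_ge | apply: limr_le];
  try exact: avoid_cvg; by apply: nearW => N; have /andP[] := avoid_itv N i.
Qed.

Lemma avoidS_cvg i : (fun N => avoid N.+1 i) @ \oo --> escape i.
Proof. by rewrite (cvg_shiftS (avoid ^~ i)); exact: (@avoid_cvg i). Qed.

Lemma escape0 : escape 0 = 0.
Proof.
apply: (norm_cvg_unique (@avoidS_cvg 0)).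
by rewrite /=; under eq_fun do rewrite avoidS0; exact: cvg_cst.
Qed.

Lemma escape_harmonic : harmonic escape.
Proof.
move=> i; apply: (norm_cvg_unique (@avoidS_cvg i.+1)).
rewrite /=; under eq_fun do rewrite avoidS.
by apply: cvgD; apply: cvgM;
  [exact: cvg_cst | exact: (@avoid_cvg i.+2) | exact: cvg_cst | exact: (@avoid_cvg i)].
Qed.

Lemma recurrent_of_unbounded_scale :
  (forall B, exists n, B < scale n) -> bd_recurrent lam mu.
Proof.
move=> scale_unb.
have escape1 : escape 1 = 0.
  have escapeE n : escape n = escape 1 * scale n.
    by rewrite (harmonicE escape_harmonic) escape0 add0r subr0.
  apply/eqP; rewrite eq_le; have /andP[-> _] := escape_itv 1; rewrite andbT.
  rewrite leNgt; apply/negP => e_gt0.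
  have [n] := scale_unb (escape 1)^-1.
  rewrite -(ltr_pM2l e_gt0) mulfV ?gt_eqF // -escapeE.
  by have /andP[_ /le_lt_trans h] := escape_itv n => /h; rewrite ltxx.
rewrite /bd_recurrent; under eq_fun do rewrite sum_first_returnE.
have : (fun N => 1 - avoid N 1) @ \oo --> 1 - escape 1.
  by apply: cvgB; [exact: cvg_cst | exact: (@avoid_cvg 1)].
by rewrite escape1 subr0.
Qed.

End BirthDeathChain.

Section RateCriteria.
Variable R : realType.
Variables lam mu : nat -> R.
Hypothesis lam_gt0 : forall n, 0 < lam n.
Hypothesis mu_gt0 : forall n, 0 < mu n.
Variable K : nat.

Lemma rho_ratio n : rho lam mu n.+1 / rho lam mu n = mu n.+1 / lam n.+1.
Proof. by rewrite rhoS mulrC mulKf // gt_eqF // rho_gt0. Qed.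

Lemma rho_ge_of_rate :
  (\forall n \near \oo, lam n / mu n <= 1 + inv_lnprod_sum K n%:R) ->
  exists2 C, 0 < C & \forall n \near \oo, expR (- lnk_sum K n%:R) <= C * rho lam mu n.
Proof.
move=> rate; apply: ratio_le_eventually => [n|n|]; [exact: expR_gt0 | exact: rho_gt0 |].
have large := logs_ge1_eventually R K.
near=> n.
have hn : logs_ge1 K (n%:R : R) by near: n.
have hn1 : logs_ge1 K (n.+1%:R : R) by near: n; exact: (near_succ large).
have rate1 : lam n.+1 / mu n.+1 <= 1 + inv_lnprod_sum K n.+1%:R.
  by near: n; exact: (near_succ rate).
have a0 := inv_lnprod_sum_ge0 hn1.
have := lnk_sum_incr_ge hn; rewrite natr1 => /(_ hn1) incr.
rewrite rho_ratio -expRB.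
apply: le_trans (_ : expR (- inv_lnprod_sum K n.+1%:R) <= _); first by rewrite ler_expR; lra.
apply: le_trans (expRN_le_inv1D a0) _.
by rewrite -invf_div lef_pV2 ?posrE ?divr_gt0 // (lt_le_trans ltr01) // lerDl.
Unshelve. all: by end_near.
Qed.

Lemma scale_unbounded_of_rate :
  (\forall n \near \oo, lam n / mu n <= 1 + inv_lnprod_sum K n%:R) ->
  forall B, exists n, B < scale lam mu n.
Proof.
move=> /rho_ge_of_rate [C C_gt0 rho_ge].
apply: (@sum_unbounded_of_telescoping _ _ (fun n => C^-1 * lnk K.+1 n%:R)).
  have large := logs_ge1_eventually R K.
  near=> n.
  have hn : logs_ge1 K (n%:R : R) by near: n.
  have hn1 : logs_ge1 K (n%:R + 1 : R) by rewrite natr1; near: n; exact: (near_succ large).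
  have rho_ge_n : expR (- lnk_sum K n%:R) <= C * rho lam mu n by near: n.
  have := le_trans (lnk_incr_le_expRN hn hn1) rho_ge_n; rewrite natr1 => le_C.
  by rewrite -mulrBr mulrC ler_pdivrMr // mulrC.
apply/cvgryPge => A; have /cvgryPge/(_ (C * A)) := @lnk_cvgy R K.+1.
by apply: filterS => n le_z; rewrite mulrC ler_pdivlMr // mulrC.
Unshelve. all: by end_near.
Qed.

Lemma rho_le_of_rate (c : R) : 1 < c ->
  (\forall n \near \oo,
     1 + inv_lnprod_sum K n%:R + (c - 1) / (n%:R * lnprod K n%:R) <= lam n / mu n) ->
  exists2 C, 0 < C & \forall n \near \oo,
    rho lam mu n <= C * expR (- (lnk_sum K n.+1%:R + (c - 1) * lnk K.+1 n.+1%:R)).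
Proof.
move=> c_gt1 rate; have s_gt0 : 0 < c - 1 by rewrite subr_gt0.
pose A x := inv_lnprod_sum K x + (c - 1) / (x * lnprod K x).
pose phi x := lnk_sum K x + (c - 1) * lnk K.+1 x.
pose b := K%:R + c.
(* The correction b^2/n pays for the second-order term of 1/(1+a) <= exp(-a+a^2):
   a <= b/(n+1) gives a^2 <= b^2/n - b^2/(n+1). *)
have [C C_gt0 rho_le] : exists2 C, 0 < C & \forall n \near \oo,
    rho lam mu n <= C * expR (- phi n.+1%:R - b ^+ 2 / n%:R).
  apply: ratio_le_eventually => [n|n|]; [exact: rho_gt0 | exact: expR_gt0 |].
  have large := logs_ge1_eventually R K.
  near=> n.
  have hn : logs_ge1 K (n%:R : R) by near: n.
  have hn1 : logs_ge1 K (n%:R + 1 : R) by rewrite natr1; near: n; exact: (near_succ large).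
  have hn2 : logs_ge1 K (n%:R + 1 + 1 : R).
    by rewrite !natr1; near: n; exact: (near_succ (near_succ large)).
  have rate1 : 1 + A (n%:R + 1) <= lam n.+1 / mu n.+1.
    by rewrite addrA natr1; near: n; exact: (near_succ rate).
  have n_gt0 : 0 < n%:R :> R := logs_ge1_gt0 (leq0n K) hn.
  have A_ge0 : 0 <= A (n%:R + 1).
    by rewrite addr_ge0 ?inv_lnprod_sum_ge0 // divr_ge0 ?ltW // mulr_gt0 // lnprod_gt0.
  have A_le : A (n%:R + 1) <= b / (n%:R + 1).
    have -> : b / (n%:R + 1) = K.+1%:R / (n%:R + 1) + (c - 1) / (n%:R + 1).
      by rewrite /b -natr1; ring.
    apply: lerD; first exact: inv_lnprod_sum_le.
    by apply: ler_wpM2l; [exact: ltW | exact: inv_lnprod_le].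
  have phi_incr : phi (n%:R + 1 + 1) - phi (n%:R + 1) <= A (n%:R + 1).
    have := lnk_sum_incr_le hn1 hn2; have := lnkS_incr_le hn1 hn2.
    rewrite /phi /A; have := ltW s_gt0; nra.
  have sq := sqr_le_subr_div n_gt0 A_ge0 A_le.
  rewrite rho_ratio -expRB -!natr1.
  apply: le_trans (_ : (1 + A (n%:R + 1))^-1 <= _).
    by rewrite -invf_div lef_pV2 ?posrE ?divr_gt0 // (lt_le_trans ltr01) // lerDl.
  apply: le_trans (inv1D_le_expR A_ge0) _; rewrite ler_expR; lra.
exists C => //; apply: filterS rho_le => n /le_trans; apply.
rewrite ler_pM2l // ler_expR lerBlDr lerDl.
by rewrite divr_ge0 ?sqr_ge0.
Unshelve. all: by end_near.
Qed.

Lemma scale_bounded_of_rate (c : R) : 1 < c ->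
  (\forall n \near \oo,
     1 + inv_lnprod_sum K n%:R + (c - 1) / (n%:R * lnprod K n%:R) <= lam n / mu n) ->
  exists B, forall n, scale lam mu n <= B.
Proof.
move=> c_gt1 /(rho_le_of_rate c_gt1) [C C_gt0 rho_le].
have s_gt0 : 0 < c - 1 by rewrite subr_gt0.
pose e n := C / (c - 1) * expR (- ((c - 1) * lnk K.+1 n%:R)).
apply: (@sum_bounded_of_telescoping _ _ e) => [n|n|].
- exact/ltW/rho_gt0.
- by rewrite mulr_ge0 ?expR_ge0 // divr_ge0 ?ltW.
have large := logs_ge1_eventually R K.
near=> n.
have hn : logs_ge1 K (n%:R : R) by near: n.
have hn1 : logs_ge1 K (n%:R + 1 : R) by rewrite natr1; near: n; exact: (near_succ large).
have rho_le_n : rho lam mu n <=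
    C * expR (- (lnk_sum K n.+1%:R + (c - 1) * lnk K.+1 n.+1%:R)) by near: n.
apply: le_trans rho_le_n _; rewrite /e -mulrBr -mulrA ler_pM2l //.
rewrite [leRHS]mulrC ler_pdivlMr // [leLHS]mulrC -!natr1.
by apply: expRN_lnk_sum_le_telescope => //; exact: ltW.
Unshelve. all: by end_near.
Qed.

End RateCriteria.

Theorem lemma2 (R : realType) (lam mu : nat -> R) :
  (forall n, 0 < lam n) -> (forall n, 0 < mu n) ->
  ((exists (c : R) (K : nat) (n0 : R), 1 < c /\ (1 <= K)%N /\
      forall n : nat, n0 < n%:R ->
        1 + 1 / n%:R
        + \sum_(1 <= k < K) 1 / (n%:R * \prod_(1 <= j < k.+1) lnk j n%:R)
        + c / (n%:R * \prod_(1 <= k < K.+1) lnk k n%:R)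
        <= lam n / mu n)
    -> bd_transient lam mu)
  /\
  ((exists (K : nat) (n0 : R), (1 <= K)%N /\
      forall n : nat, n0 < n%:R ->
        lam n / mu n
        <= 1 + 1 / n%:R
           + \sum_(1 <= k < K.+1) 1 / (n%:R * \prod_(1 <= j < k.+1) lnk j n%:R))
    -> bd_recurrent lam mu).
Proof.
move=> lam_gt0 mu_gt0.
have large (n0 : R) : \forall n \near \oo, n0 < n%:R :> R.
  by have /cvgryPgt := @cvgr_idn R; apply.
split=> [[c [K [n0 [c_gt1 [K_ge1 rate]]]]] | [K [n0 [_ rate]]]].
  apply: (transient_of_bounded_scale lam_gt0 mu_gt0).
  apply: (scale_bounded_of_rate lam_gt0 mu_gt0 (K := K) c_gt1).
  by apply: filterS (large n0) => n /rate; rewrite inv_lnprod_sum_recr.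
apply: (recurrent_of_unbounded_scale lam_gt0 mu_gt0).
apply: (scale_unbounded_of_rate lam_gt0 mu_gt0 (K := K)).
by apply: filterS (large n0) => n /rate; rewrite -addrA -inv_lnprod_sumE.
Qed.
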